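(* Let $\mathcal{CT}$ be a theory of constraints, with set of atomic constraints $\mathcal C$, that is closed under negation. For any constraints $c_1,\dots,c_m\in\mathcal C$ there exist conjunctions $e_1,\dots,e_r$ of constraints such that $\mathcal{CT}\models\forall(\neg(c_1\wedge\dots\wedge c_m)\leftrightarrow(e_1\vee\dots\vee e_r))$, each $e_i$ is consistent, and $e_i$ and $e_j$ are mutually exclusive for all $i\neq j$.
   Context: $\mathcal{CT}$ is a first-order theory with equality (identity on its domain, including the Clark Equality Theory) whose atomic formulas form the set $\mathcal C$ of (atomic) constraints; $\mathcal{CT}\models\varphi$ means $\varphi$ is valid in $\mathcal{CT}$; $\forall(\cdot)$ and $\exists(\cdot)$ denote universal and existential closure. A conjunction $e$ of constraints is consistent if $\mathcal{CT}\models\exists(e)$; conjunctions $e,e'$ are mutually exclusive if $\mathcal{CT}\models\neg\exists(e\wedge e')$. $\mathcal{CT}$ is closed under negation if for every $c\in\mathcal C$ there exist $d_1,\dots,d_m\in\mathcal C$ such that $\mathcal{CT}\models\forall(\neg c\leftrightarrow(d_1\vee\dots\vee d_m))$ and $\mathcal{CT}\models\neg\exists(d_i\wedge d_j)$ for all $i,j$ with $i\neq j$.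
   Formalization: $\mathcal{CT}$ is also assumed complete: every conjunction e of constraints satisfies either $\mathcal{CT}\models\exists(e)$ or $\mathcal{CT}\models\neg\exists(e)$. The paper assumes this as well. *)

From Stdlib Require Import List.
Import ListNotations.

(* A first-order constraint theory, given semantically:
   - [var]   : the variables,
   - [constr]  : the set C of atomic constraints (atomic formulas),
   - [model] : an index type for the models of CT, each with domain [dom m],
   - [sat m v c] : the atomic constraint c holds in model m under valuation v.
   CT |= phi  means phi holds in every model of CT. *)
Record CTheory := {
  var : Type;
  constr : Type;
  model : Type;
  dom : model -> Type;
  sat : forall m : model, (var -> dom m) -> constr -> Prop
}.

Arguments sat {c} m v _.

Definition holds_conj {T : CTheory} (m : model T) (v : var T -> dom T m)
  (e : list (constr T)) : Prop :=
  forall c, In c e -> sat m v c.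

Definition consistent {T : CTheory} (e : list (constr T)) : Prop :=
  forall m : model T, exists v : var T -> dom T m, holds_conj m v e.

Definition mutually_exclusive {T : CTheory} (e e' : list (constr T)) : Prop :=
  forall m : model T, ~ (exists v : var T -> dom T m,
                           holds_conj m v e /\ holds_conj m v e').

Definition closed_under_negation (T : CTheory) : Prop :=
  forall c : constr T, exists ds : list (constr T),
    (forall (m : model T) (v : var T -> dom T m),
        ~ sat m v c <-> exists d, In d ds /\ sat m v d) /\
    (forall (i j : nat) (d d' : constr T),
        nth_error ds i = Some d -> nth_error ds j = Some d' -> i <> j ->
        mutually_exclusive [d] [d']).

(* Standard CHR completeness assumption on CT: every conjunction of
   constraints is either consistent or inconsistent. *)
Definition complete (T : CTheory) : Prop :=
  forall e : list (constr T),
    consistent e \/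
    (forall m : model T, ~ exists v : var T -> dom T m, holds_conj m v e).

(** Peel off one constraint at a time: [~ (c /\ E)] is the disjoint union of
    [~ c] and [c /\ ~ E].  Closure under negation writes [~ c] as a disjunction
    of pairwise exclusive constraints, each of which excludes [c], and by
    induction [~ E] is a disjunction of pairwise exclusive conjunctions, which
    stay pairwise exclusive after adding [c] and exclude every [d] implying [~ c].
    Finally, by completeness each conjunction of the resulting disjunction is
    either consistent or unsatisfiable, and the unsatisfiable ones can be
    dropped. *)

From Stdlib Require Import List Classical.
Import ListNotations.

Section Pairwise.

Variables (A : Type) (R : A -> A -> Prop).

Definition pairwise_nth (l : list A) : Prop :=
  forall i j x y, nth_error l i = Some x -> nth_error l j = Some y -> i <> j ->
    R x y.

Lemma ForallOrdPairs_of_pairwise_nth l : pairwise_nth l -> ForallOrdPairs R l.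
Proof.
  induction l as [|x l IH]; intros Hl; constructor.
  - apply Forall_forall; intros y Hy.
    apply In_nth_error in Hy as [n Hn].
    exact (Hl 0 (S n) x y eq_refl Hn (O_S n)).
  - apply IH; intros i j a b Ha Hb Hij.
    apply (Hl (S i) (S j)); auto.
Qed.

Lemma pairwise_nth_of_ForallOrdPairs :
  (forall x y, R x y -> R y x) ->
  forall l, ForallOrdPairs R l -> pairwise_nth l.
Proof.
  intros Rsym l Hl; induction Hl as [|x l Hx Hl IH];
    intros [|i] [|j] a b Ha Hb Hij; simpl in Ha, Hb;
    try discriminate; try congruence.
  - injection Ha as <-; apply nth_error_In in Hb.
    exact (proj1 (Forall_forall _ _) Hx b Hb).
  - injection Hb as <-; apply nth_error_In in Ha.
    exact (Rsym _ _ (proj1 (Forall_forall _ _) Hx a Ha)).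
  - exact (IH i j a b Ha Hb (fun E => Hij (f_equal S E))).
Qed.

Lemma ForallOrdPairs_app l1 l2 :
  ForallOrdPairs R l1 -> ForallOrdPairs R l2 ->
  (forall x y, In x l1 -> In y l2 -> R x y) ->
  ForallOrdPairs R (l1 ++ l2).
Proof.
  intros H1 H2 H12; induction H1 as [|x l1 Hx H1 IH]; simpl; [exact H2|].
  constructor.
  - apply Forall_app; split; [exact Hx|].
    apply Forall_forall; intros y Hy; apply H12; simpl; auto.
  - apply IH; intros a b Ha Hb; apply H12; simpl; auto.
Qed.

Lemma ForallOrdPairs_filter_ex (P : A -> Prop) l :
  ForallOrdPairs R l ->
  exists l', (forall x, In x l' <-> In x l /\ P x) /\ ForallOrdPairs R l'.
Proof.
  intros Hl; induction Hl as [|x l Hx Hl IH].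
  - exists []; split; [simpl; tauto | constructor].
  - destruct IH as [l' [Hin Hl']].
    assert (Hsub : incl l' l) by (intros y Hy; apply Hin, Hy).
    destruct (classic (P x)) as [Px|nPx].
    + exists (x :: l'); split.
      * intros y; simpl; rewrite Hin; split; [intros [<-|]|intros [[<-|] ?]]; tauto.
      * constructor; [exact (incl_Forall Hsub Hx) | exact Hl'].
    + exists l'; split; [|exact Hl'].
      intros y; simpl; rewrite Hin; split; [tauto|].
      intros [[<-|] ?]; tauto.
Qed.

End Pairwise.

Arguments ForallOrdPairs_filter_ex {A R} P {l}.

Lemma ForallOrdPairs_map {A B} (R : A -> A -> Prop) (R' : B -> B -> Prop)
    (f : A -> B) l :
  (forall x y, R x y -> R' (f x) (f y)) ->
  ForallOrdPairs R l -> ForallOrdPairs R' (map f l).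
Proof.
  intros Hf Hl; induction Hl as [|x l Hx Hl IH]; simpl; constructor; [|exact IH].
  apply Forall_map; exact (Forall_impl _ (Hf x) Hx).
Qed.

Section Decomposition.

Variable T : CTheory.

Definition unsatisfiable (e : list (constr T)) : Prop :=
  forall m : model T, ~ exists v : var T -> dom T m, holds_conj m v e.

Definition neg_dnf (cs : list (constr T)) (es : list (list (constr T))) : Prop :=
  forall (m : model T) (v : var T -> dom T m),
    ~ holds_conj m v cs <-> exists e, In e es /\ holds_conj m v e.

Lemma holds_conj_incl m v (e f : list (constr T)) :
  incl e f -> holds_conj m v f -> holds_conj m v e.
Proof. intros Hef Hf c Hc; exact (Hf c (Hef c Hc)). Qed.

Lemma holds_conj_cons m v c (e : list (constr T)) :
  holds_conj m v (c :: e) <-> sat m v c /\ holds_conj m v e.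
Proof.
  split.
  - intros H; split; [apply H; left; reflexivity|].
    exact (holds_conj_incl m v e (c :: e) (incl_tl c (incl_refl e)) H).
  - intros [Hc He] x [<-|Hx]; auto.
Qed.

Lemma holds_conj_single m v (c : constr T) : holds_conj m v [c] <-> sat m v c.
Proof.
  rewrite holds_conj_cons; split; [tauto|].
  intros Hc; split; [exact Hc | intros x []].
Qed.

Lemma mutually_exclusive_sym (e e' : list (constr T)) :
  mutually_exclusive e e' -> mutually_exclusive e' e.
Proof. intros H m [v [He' He]]; apply (H m); exists v; tauto. Qed.

Lemma mutually_exclusive_incl (e e' f f' : list (constr T)) :
  incl e f -> incl e' f' -> mutually_exclusive e e' -> mutually_exclusive f f'.
Proof.
  intros Hef Hef' H m [v [Hf Hf']]; apply (H m); exists v.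
  split; eapply holds_conj_incl; eassumption.
Qed.

Lemma neg_dnf_nil : neg_dnf [] [].
Proof.
  intros m v; split.
  - intros H; exfalso; apply H; intros x [].
  - intros [e [[] _]].
Qed.

Lemma neg_dnf_exclusive cs es e :
  neg_dnf cs es -> In e es -> mutually_exclusive e cs.
Proof.
  intros Hdnf He m [v [Hv Hcs]].
  exact (proj2 (Hdnf m v) (ex_intro _ e (conj He Hv)) Hcs).
Qed.

Lemma neg_dnf_single_of_closed c :
  closed_under_negation T ->
  exists fs, neg_dnf [c] fs /\ ForallOrdPairs mutually_exclusive fs.
Proof.
  intros Hneg; destruct (Hneg c) as [ds [Hds Hexcl]].
  exists (map (fun d => [d]) ds); split.
  - intros m v; rewrite holds_conj_single, Hds; split.
    + intros [d [Hd Hv]]; exists [d]; split; [apply (in_map (fun d => [d])), Hd|].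
      apply holds_conj_single, Hv.
    + intros [e [He Hv]]; apply in_map_iff in He as [d [<- Hd]].
      exists d; split; [exact Hd | apply holds_conj_single, Hv].
  - apply ForallOrdPairs_map with (R := fun d d' => mutually_exclusive [d] [d']);
      [tauto|].
    apply ForallOrdPairs_of_pairwise_nth; exact Hexcl.
Qed.

Lemma neg_dnf_cons c cs fs es :
  neg_dnf [c] fs -> neg_dnf cs es -> neg_dnf (c :: cs) (fs ++ map (cons c) es).
Proof.
  intros Hc Hcs m v; rewrite holds_conj_cons; split.
  - intros Hv; destruct (classic (sat m v c)) as [Hsat|Hnsat].
    + destruct (proj1 (Hcs m v) (fun Hv' => Hv (conj Hsat Hv'))) as [e [He Hve]].
      exists (c :: e); split; [apply in_or_app; right; apply in_map, He|].
      apply holds_conj_cons; tauto.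
    + rewrite <- holds_conj_single in Hnsat.
      destruct (proj1 (Hc m v) Hnsat) as [f [Hf Hvf]].
      exists f; split; [apply in_or_app; left; exact Hf | exact Hvf].
  - intros [e [He Hve]] [Hsat Hvcs]; apply in_app_or in He as [Hf|Hce].
    + apply (proj2 (Hc m v)); [exists e; tauto | apply holds_conj_single, Hsat].
    + apply in_map_iff in Hce as [e' [<- He']].
      apply holds_conj_cons in Hve as [_ Hve'].
      apply (proj2 (Hcs m v)); [exists e'; tauto | exact Hvcs].
Qed.

Lemma neg_dnf_cons_exclusive c fs es :
  neg_dnf [c] fs ->
  ForallOrdPairs mutually_exclusive fs -> ForallOrdPairs mutually_exclusive es ->
  ForallOrdPairs mutually_exclusive (fs ++ map (cons c) es).
Proof.
  intros Hc Hfs Hes; apply ForallOrdPairs_app; [exact Hfs| |].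
  - apply ForallOrdPairs_map with (R := mutually_exclusive); [|exact Hes].
    intros e e'; apply mutually_exclusive_incl; apply incl_tl, incl_refl.
  - intros f e Hf Hce; apply in_map_iff in Hce as [e' [<- _]].
    apply (mutually_exclusive_incl f [c]); [apply incl_refl| |].
    + intros x [<-|[]]; left; reflexivity.
    + exact (neg_dnf_exclusive [c] fs f Hc Hf).
Qed.

Lemma neg_dnf_exclusive_ex cs :
  closed_under_negation T ->
  exists es, neg_dnf cs es /\ ForallOrdPairs mutually_exclusive es.
Proof.
  intros Hneg; induction cs as [|c cs [es [Hdnf Hes]]].
  - exists []; split; [exact neg_dnf_nil | constructor].
  - destruct (neg_dnf_single_of_closed c Hneg) as [fs [Hc Hfs]].
    exists (fs ++ map (cons c) es); split.
    + exact (neg_dnf_cons c cs fs es Hc Hdnf).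
    + exact (neg_dnf_cons_exclusive c fs es Hc Hfs Hes).
Qed.

Lemma neg_dnf_drop_unsatisfiable cs es es' :
  neg_dnf cs es -> incl es' es ->
  (forall e, In e es -> In e es' \/ unsatisfiable e) ->
  neg_dnf cs es'.
Proof.
  intros Hdnf Hsub Hdrop m v; rewrite (Hdnf m v); split.
  - intros [e [He Hv]]; destruct (Hdrop e He) as [He'|Hunsat].
    + exists e; tauto.
    + exfalso; apply (Hunsat m); exists v; exact Hv.
  - intros [e [He Hv]]; exists e; split; [apply Hsub, He | exact Hv].
Qed.

End Decomposition.

Theorem lemmaB5 (T : CTheory) (Hneg : closed_under_negation T)
  (Hcomp : complete T) (cs : list (constr T)) :
  exists es : list (list (constr T)),
    (forall (m : model T) (v : var T -> dom T m),
        ~ holds_conj m v cs <-> exists e, In e es /\ holds_conj m v e) /\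
    (forall e, In e es -> consistent e) /\
    (forall (i j : nat) (e e' : list (constr T)),
        nth_error es i = Some e -> nth_error es j = Some e' -> i <> j ->
        mutually_exclusive e e').
Proof.
  destruct (neg_dnf_exclusive_ex T cs Hneg) as [es [Hdnf Hexcl]].
  destruct (ForallOrdPairs_filter_ex consistent Hexcl) as [es' [Hin Hexcl']].
  exists es'; split; [|split].
  - apply (neg_dnf_drop_unsatisfiable T cs es es' Hdnf).
    + intros e He; apply Hin, He.
    + intros e He; destruct (Hcomp e); [left; apply Hin | right]; tauto.
  - intros e He; apply Hin, He.
  - apply pairwise_nth_of_ForallOrdPairs; [apply mutually_exclusive_sym|].
    exact Hexcl'.
Qed.
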